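(* Suppose a sesquiunital sesquialgebra structure of finite free type on $k^G$ admits an antipode (i.e. is hopfish). If $g,h\in G$ satisfy $r(g)=l(h)$, then there exists $s\in G$ with $d^s_{gh}\neq0$.
   Context: $k$ is a field, $G$ a finite set, $A=k^G$ (pointwise operations), $A^{\otimes r}=k^{G^r}$, $A^{op}=A$, $\delta_x$ the characteristic function of $x$; $\delta_{a,b}$ the Kronecker delta; ${}^*$ is the $k$-dual. A sesquiunital sesquialgebra on $A$ is an $(A\otimes A,A)$-bimodule $\boldsymbol\Delta$ and right $A$-module $\boldsymbol\epsilon$ with $(A\otimes\boldsymbol\Delta)\otimes_{A\otimes A}\boldsymbol\Delta\cong(\boldsymbol\Delta\otimes A)\otimes_{A\otimes A}\boldsymbol\Delta$ and $(\boldsymbol\epsilon\otimes A)\otimes_{A\otimes A}\boldsymbol\Delta\cong A\cong(A\otimes\boldsymbol\epsilon)\otimes_{A\otimes A}\boldsymbol\Delta$. Decompose $\boldsymbol\Delta=\bigoplus\boldsymbol\Delta^g_{hk}$, $\boldsymbol\Delta^g_{hk}=(\delta_h\otimes\delta_k)\boldsymbol\Delta\delta_g$, and $\boldsymbol\epsilon=\bigoplus\boldsymbol\epsilon^g$, $\boldsymbol\epsilon^g=\boldsymbol\epsilon\delta_g$; finite free type means all components are finite-dimensional; $d^g_{hk}=\dim\boldsymbol\Delta^g_{hk}$, $e^g=\dim\boldsymbol\epsilon^g\in\{0,1\}$; $G^0=\{g:e^g=1\}$; $l(g),r(g)\in G^0$ are the unique elements with $d^k_{hg}=\delta_{h,l(g)}\delta_{g,k}$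 and $d^k_{gh}=\delta_{r(g),h}\delta_{g,k}$ for all $h\in G^0$, $k\in G$. A preantipode is a left $A\otimes A$-module $\mathbf S$ with an isomorphism of right $A\otimes A$-modules $\mathbf S^*\cong\mathrm{Hom}_A(\boldsymbol\epsilon,\boldsymbol\Delta)$ (right $A$-module maps, with $(gb)(u)=g(bu)$); it is an antipode (and the structure is hopfish) if $\mathbf S$ is free of rank one as a module over the first tensor factor $A$. *)

From mathcomp Require Import all_boot all_order all_algebra.
Set Implicit Arguments. Unset Strict Implicit. Unset Printing Implicit Defensive.
Import GRing.Theory.
Local Open Scope ring_scope.

(* A module (resp. bimodule) over tensor powers of A = k^G is the
   same thing as a G^n-graded k-vector space: it is the direct sum of its
   components (idempotents delta_x act as projections).  For a structure of
   finite free type every component is a finite-dimensional k-vector space,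
   modelled here by a [vectType k].

   Delta g h k' = Δ^g_{h k'} = (δ_h ⊗ δ_k') Δ δ_g,  Eps g = ε^g = ε δ_g.     *)

Section Sesqui.
Variables (k : fieldType) (G : finType).

Definition dimD (Delta : G -> G -> G -> vectType k) (g h k' : G) : nat :=
  \dim {: Delta g h k'}.
Definition dimE (Eps : G -> vectType k) (g : G) : nat := \dim {: Eps g}.

(* Components of the composite bimodules (A^{⊗3}, A): an isomorphism of
   graded spaces with finite-dimensional components is the same as an
   equality of the dimensions of all components.
   ((A⊗Δ)⊗_{A⊗A}Δ)^g_{xyz} = ⊕_m Δ^m_{yz} ⊗ Δ^g_{xm},
   ((Δ⊗A)⊗_{A⊗A}Δ)^g_{xyz} = ⊕_m Δ^m_{xy} ⊗ Δ^g_{mz}.                      *)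
Definition coassoc_iso (Delta : G -> G -> G -> vectType k) : Prop :=
  forall x y z g : G,
    (\sum_(m : G) dimD Delta m y z * dimD Delta g x m =
     \sum_(m : G) dimD Delta m x y * dimD Delta g m z)%N.

(* ((ε⊗A)⊗_{A⊗A}Δ)^g_y = ⊕_a ε^a ⊗ Δ^g_{ay} ≅ A^g_y = δ_{y,g} k, and
   ((A⊗ε)⊗_{A⊗A}Δ)^g_y = ⊕_a ε^a ⊗ Δ^g_{ya} ≅ δ_{y,g} k.                  *)
Definition counit_iso (Delta : G -> G -> G -> vectType k)
    (Eps : G -> vectType k) : Prop :=
  (forall y g : G,
     (\sum_(a : G) dimE Eps a * dimD Delta g a y)%N = (y == g) :> nat) /\
  (forall y g : G,
     (\sum_(a : G) dimE Eps a * dimD Delta g y a)%N = (y == g) :> nat).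

Definition sesquialgebra (Delta : G -> G -> G -> vectType k)
    (Eps : G -> vectType k) : Prop :=
  coassoc_iso Delta /\ counit_iso Delta Eps.

(* Hom_A(ε, Δ) as a (right) A⊗A-module: its (h,k')-component is
   ⊕_g Hom_k(ε^g, Δ^g_{hk'}). *)
Definition dimHom (Delta : G -> G -> G -> vectType k) (Eps : G -> vectType k)
    (h k' : G) : nat :=
  (\sum_(g : G) dimE Eps g * dimD Delta g h k')%N.

(* An antipode: a left A⊗A-module S (components S h k' = (δ_h⊗δ_k') S),
   with S^* ≅ Hom_A(ε,Δ) as right A⊗A-modules (componentwise: the dual of
   S_{hk'} is isomorphic to the (h,k')-component of Hom_A(ε,Δ); the latter
   being finite-dimensional, so is S_{hk'}, whose dual has the same
   dimension), and S free of rank one over the first tensor factor A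
   (i.e. for every h, ⊕_{k'} S_{hk'} ≅ k).                                  *)
Definition hopfish (Delta : G -> G -> G -> vectType k)
    (Eps : G -> vectType k) : Prop :=
  exists S : G -> G -> vectType k,
    (forall h k' : G, \dim {: S h k'} = dimHom Delta Eps h k') /\
    (forall h : G, (\sum_(k' : G) \dim {: S h k'})%N = 1%N).

Definition G0 (Eps : G -> vectType k) (g : G) : bool := dimE Eps g == 1%N.

Definition is_l (Delta : G -> G -> G -> vectType k) (Eps : G -> vectType k)
    (g x : G) : Prop :=
  G0 Eps x /\
  forall h k' : G, G0 Eps h ->
    dimD Delta k' h g = ((h == x) && (g == k')) :> nat.

Definition is_r (Delta : G -> G -> G -> vectType k) (Eps : G -> vectType k)
    (g x : G) : Prop :=
  G0 Eps x /\
  forall h k' : G, G0 Eps h ->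
    dimD Delta k' g h = ((x == h) && (g == k')) :> nat.

End Sesqui.

From mathcomp Require Import all_boot all_order all_algebra.

(* Only the supports of the structure constants matter.  Coassociativity
   propagates nonzero terms between the two sides of its sum, and each counit
   equation forces the index of a nonzero term next to a unit e^a to be the
   diagonal one.  The antipode makes some Delta^a_{hz} with e^a nonzero exist;
   inserting the unit x = l(h) shows a = x, and then inserting r(g) = x on the
   other side of coassociativity produces a nonzero Delta^s_{gh}. *)

Lemma sum_nat_gt0 (I : finType) (F : I -> nat) :
  0 < \sum_i F i -> exists i, 0 < F i.
Proof.
by rewrite lt0n sum_nat_seq_neq0 => /hasP[i _ /andP[_]]; rewrite -lt0n; exists i.
Qed.

Lemma leq_sum_term {I : finType} (F : I -> nat) (i : I) :
  F i <= \sum_j F j.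
Proof. by rewrite (bigD1 i) // leq_addr. Qed.

Section Support.
Context {k : fieldType} {G : finType}.
Context {Delta : G -> G -> G -> vectType k} {Eps : G -> vectType k}.
Hypothesis coassoc : coassoc_iso Delta.
Hypothesis counit : counit_iso Delta Eps.

Local Notation d := (dimD Delta).
Local Notation e := (dimE Eps).

Lemma coassoc_supp_lr {x y z g m} :
  0 < d m x y -> 0 < d g m z ->
  exists m', 0 < d m' y z /\ 0 < d g x m'.
Proof.
move=> dxy dmz.
have : 0 < \sum_m' d m' x y * d g m' z.
  by apply: leq_trans _ (leq_sum_term _ m); rewrite muln_gt0 dxy.
rewrite -coassoc => /sum_nat_gt0[m']; rewrite muln_gt0 => /andP[dyz dxm'].
by exists m'.
Qed.

Lemma coassoc_supp_rl {x y z g m} :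
  0 < d m y z -> 0 < d g x m ->
  exists m', 0 < d m' x y /\ 0 < d g m' z.
Proof.
move=> dyz dxm.
have : 0 < \sum_m' d m' y z * d g x m'.
  by apply: leq_trans _ (leq_sum_term _ m); rewrite muln_gt0 dyz.
rewrite coassoc => /sum_nat_gt0[m']; rewrite muln_gt0 => /andP[dxy dmz].
by exists m'.
Qed.

Lemma counitl_supp {a y g} : 0 < e a -> 0 < d g a y -> y = g.
Proof.
move=> ea dg; have := leq_sum_term (fun b => e b * d g b y) a.
rewrite counit.1 => le_term.
have : 0 < (y == g) by apply: leq_trans _ le_term; rewrite muln_gt0 ea dg.
by case: eqP.
Qed.

Lemma counitr_supp {a y g} : 0 < e a -> 0 < d g y a -> y = g.
Proof.
move=> ea dg; have := leq_sum_term (fun b => e b * d g y b) a.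
rewrite counit.2 => le_term.
have : 0 < (y == g) by apply: leq_trans _ le_term; rewrite muln_gt0 ea dg.
by case: eqP.
Qed.

Lemma hopfish_supp (h : G) :
  hopfish Delta Eps -> exists z a, 0 < e a /\ 0 < d a h z.
Proof.
case=> S [dimS rank1].
have [z] : exists z, 0 < dimHom Delta Eps h z.
  by apply: sum_nat_gt0; rewrite -(eq_bigr _ (fun z _ => dimS h z)) rank1.
by case/sum_nat_gt0=> a; rewrite muln_gt0 => /andP[ea da]; exists z, a.
Qed.

Lemma left_unit_supp {x h z a} :
  0 < e x -> 0 < d h x h -> 0 < e a -> 0 < d a h z -> a = x.
Proof.
move=> ex dxh ea dhz.
have [m [dm dam]] := coassoc_supp_lr dxh dhz.
have Em := counitl_supp ex dam; subst m.
by rewrite (counitr_supp ea dam).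
Qed.

End Support.

Theorem proposition6p7 (k : fieldType) (G : finType)
    (Delta : G -> G -> G -> vectType k) (Eps : G -> vectType k) :
  sesquialgebra Delta Eps ->
  hopfish Delta Eps ->
  forall g h x : G,
    is_r Delta Eps g x -> is_l Delta Eps h x ->
    exists s : G, dimD Delta s g h <> 0%N.
Proof.
move=> [coassoc counit] hopf g h x [Gx r_g] [_ l_h].
have ex : 0 < dimE Eps x by rewrite (eqP Gx).
have dxh : 0 < dimD Delta h x h by rewrite l_h // !eqxx.
have dgx : 0 < dimD Delta g g x by rewrite r_g // !eqxx.
have [z [a [ea dhz]]] := hopfish_supp h hopf.
have Ea := left_unit_supp coassoc counit ex dxh ea dhz; subst a.
have [s [dgh _]] := coassoc_supp_rl coassoc dhz dgx.
by exists s => ds; rewrite ds in dgh.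
Qed.
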